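(* For all non-negative integers $n$, $p$ and $m$, $$\sum_{k=0}^n\frac{1}{2^{2k}}\binom{2(k+p)}{k+p}\binom{k+p}{k}H_{n-k}(m)\left(O_{k+p}-O_p\right)=\frac12\sum_{k=0}^n\frac{1}{2^{2k}}\binom{2(k+p)}{k+p}\binom{k+p}{k}H_{n-k}(m+1).$$ In particular, $$\sum_{k=0}^n\frac{1}{2^{2k}}\binom{2(k+p)}{k+p}\binom{k+p}{k}H_{n-k}=\frac{1}{2^{2n}}\,\frac{p+1}{2p+1}\binom{2(n+p+1)}{n+p+1}\binom{n+p+1}{n}\left(O_{n+p+1}-O_{p+1}\right).$$
   Context: For integers $m\ge 1$, $n\ge 0$, the multiple harmonic-like numbers are $H_n(m)=\sum_{1\le k_1+k_2+\cdots+k_m\le n}\frac{1}{k_1k_2\cdots k_m}$ (sum over positive integers $k_1,\dots,k_m$), with $H_n(0)=1$ for $n\ge 0$ and $H_0(m)=0$ for $m\ge1$. $H_n=\sum_{k=1}^n\frac1k$. The odd harmonic numbers are $O_n=\sum_{k=1}^n\frac{1}{2k-1}$, $O_0=0$. *)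

From mathcomp Require Import all_boot all_order all_algebra.
Set Implicit Arguments. Unset Strict Implicit. Unset Printing Implicit Defensive.
Import Order.TTheory GRing.Theory Num.Theory.
Local Open Scope ring_scope.

Definition harm (n : nat) : rat := \sum_(1 <= k < n.+1) (k%:R)^-1.

Definition oharm (n : nat) : rat := \sum_(1 <= k < n.+1) ((2 * k - 1)%N%:R)^-1.

(* Multiple harmonic-like numbers H_n(m): sum over positive k_1..k_m with
   1 <= k_1+...+k_m <= n of 1/(k_1...k_m); H_n(0) = 1.
   Each k_i ranges over 'I_(n+1) (i.e. 0..n), which loses nothing since
   k_i <= sum <= n. *)
Definition mharm (m n : nat) : rat :=
  if m is m0.+1 then
  \sum_(k : {ffun 'I_m -> 'I_n.+1} |
          [forall i, (0 < (k i : nat))%N] &&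
          ((1 <= \sum_(i < m) (k i : nat)) && (\sum_(i < m) (k i : nat) <= n))%N)
     \prod_(i < m) ((k i : nat)%:R)^-1
  else 1.

From mathcomp Require Import all_boot all_order all_algebra.
From mathcomp Require Import zify ring lra.
Import Order.TTheory GRing.Theory Num.Theory.
Set Implicit Arguments. Unset Strict Implicit. Unset Printing Implicit Defensive.
Local Open Scope ring_scope.

(* Let a_k be the weight (2^(2k))^-1 C(2(k+p), k+p) C(k+p, k) and write sums of the form
   sum_k u_k v_(n-k) as Cauchy products.  With l_j = 1/j (l_0 = 0) one has H_n(m+1) = (l * H(m))_n,
   and the heart of the proof is that 2 a_k (O_(k+p) - O_p) = (a * l)_k: both sides satisfy
   x_(k+1) 2(k+1) = x_k (2(k+p)+1) + 2 a_k, a recurrence inherited from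
   a_(k+1) 2(k+1) = a_k (2(k+p)+1).  Associativity of the Cauchy product then gives the first
   identity; for m = 0 it reduces the second one to sum_(k<=n) a_k (O_(k+p) - O_p), which
   telescopes to the closed form. *)

Section Convolution.
Variable R : nzRingType.

Definition conv (f g : nat -> R) (n : nat) : R := \sum_(k < n.+1) f k * g (n - k)%N.

Lemma conv_coefM (f g : nat -> R) n N : (n <= N)%N ->
  conv f g n = ((\poly_(i < N.+1) f i) * (\poly_(i < N.+1) g i))`_n.
Proof.
move=> le_nN; rewrite coefM; apply: eq_bigr => j _.
rewrite !coef_poly !ltnS (leq_trans (leq_subr _ _) le_nN).
by rewrite (leq_trans _ le_nN) // -ltnS.
Qed.

Lemma coefM_low (P P' Q Q' : {poly R}) n :
  (forall i, (i <= n)%N -> P`_i = P'`_i) -> (forall i, (i <= n)%N -> Q`_i = Q'`_i) ->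
  (P * Q)`_n = (P' * Q')`_n.
Proof.
move=> PE QE; rewrite !coefM; apply: eq_bigr => j _.
by rewrite PE -1?ltnS // QE ?leq_subr.
Qed.

Lemma convA f g h n : conv f (conv g h) n = conv (conv f g) h n.
Proof.
pose P (x : nat -> R) := \poly_(i < n.+1) x i.
have convP x y i : (i <= n)%N -> (P x * P y)`_i = (P (conv x y))`_i.
  by move=> le_in; rewrite coef_poly ltnS le_in (conv_coefM _ _ le_in).
rewrite !(conv_coefM _ _ (leqnn n)) -/(P f) -/(P h) -/(P (conv g h)) -/(P (conv f g)).
rewrite (@coefM_low _ (P f) _ (P g * P h)) // => [|i /convP //].
by rewrite mulrA; apply: coefM_low => // i /convP.
Qed.

Lemma conv_shiftl f g n : f 0%N = 0 -> conv f g n.+1 = conv (fun i => f i.+1) g n.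
Proof. by move=> f0; rewrite /conv big_ord_recl f0 mul0r add0r. Qed.

Lemma convDl (f g h : nat -> R) n :
  conv (fun i => f i + g i) h n = conv f h n + conv g h n.
Proof. by rewrite /conv -big_split; apply: eq_bigr => i _; rewrite mulrDl. Qed.

Lemma convMl c (f h : nat -> R) n : conv (fun i => c * f i) h n = c * conv f h n.
Proof. by rewrite /conv mulr_sumr; apply: eq_bigr => i _; rewrite mulrA. Qed.

End Convolution.

Section ReciprocalConvolution.
Variable R : numFieldType.

(* [recip 0 = 0] because [0^-1 = 0]; this kills the k = 0 terms of the convolutions. *)
Definition recip (j : nat) : R := j%:R^-1.

Lemma recip0 : recip 0 = 0.
Proof. by rewrite /recip invr0. Qed.

Lemma conv_recip_mulr f k :
  conv f recip k * k%:R = \sum_(i < k) f i + conv (fun i => f i * i%:R) recip k.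
Proof.
rewrite /conv [in LHS]big_ord_recr [X in _ + X]big_ord_recr /= subnn recip0.
rewrite !mulr0 !addr0 mulr_suml -big_split /=.
apply: eq_bigr => i _; have lt_ik := ltn_ord i.
have nz_ki : (k - i)%:R != 0 :> R by rewrite pnatr_eq0 subn_eq0 -ltnNge.
have -> : k%:R = i%:R + (k - i)%:R :> R by rewrite -natrD subnKC // ltnW.
by rewrite /recip; field.
Qed.

End ReciprocalConvolution.

Arguments recip {R} j.

Section FfunCons.
Variable T : finType.

Definition ffun_cons m (t : T) (g : {ffun 'I_m -> T}) : {ffun 'I_m.+1 -> T} :=
  [ffun i => if unlift ord0 i is Some j then g j else t].

Lemma ffun_cons0 m t (g : {ffun 'I_m -> T}) : ffun_cons t g ord0 = t.
Proof. by rewrite ffunE unlift_none. Qed.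

Lemma ffun_consS m t (g : {ffun 'I_m -> T}) j : ffun_cons t g (lift ord0 j) = g j.
Proof. by rewrite ffunE liftK. Qed.

Lemma big_ffun_cons (R : nmodType) m (F : {ffun 'I_m.+1 -> T} -> R) :
  \sum_f F f = \sum_(t : T) \sum_(g : {ffun 'I_m -> T}) F (ffun_cons t g).
Proof.
rewrite pair_big /= (reindex (fun q : T * {ffun 'I_m -> T} => ffun_cons q.1 q.2)) //.
apply: onW_bij; exists (fun f : {ffun 'I_m.+1 -> T} => (f ord0, [ffun j => f (lift ord0 j)])).
  by move=> [t g] /=; rewrite ffun_cons0; congr pair; apply/ffunP => j; rewrite ffunE ffun_consS.
move=> f; apply/ffunP => i; rewrite ffunE.
by case: (unliftP ord0 i) => [j ->|->]; rewrite ?ffunE.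
Qed.

Lemma ffun_cons_forall m t (g : {ffun 'I_m -> T}) (P : pred T) :
  [forall i, P (ffun_cons t g i)] = P t && [forall j, P (g j)].
Proof.
apply/forallP/andP => [Pf|[Pt /forallP Pg] i].
  by split; [rewrite -(ffun_cons0 t g) | apply/forallP => j; rewrite -(ffun_consS t g)].
by case: (unliftP ord0 i) => [j ->|->]; rewrite ?ffun_consS ?ffun_cons0.
Qed.

Lemma big_ord_ffun_cons (R : Type) (idx : R) (op : R -> R -> R) (F : T -> R) m t
    (g : {ffun 'I_m -> T}) :
  \big[op/idx]_(i < m.+1) F (ffun_cons t g i) = op (F t) (\big[op/idx]_(i < m) F (g i)).
Proof.
by rewrite big_ord_recl ffun_cons0; congr op; apply: eq_bigr => j _; rewrite ffun_consS.
Qed.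

End FfunCons.

Definition mharm_seq (m : nat) : nat -> rat := iter m (conv recip) (fun=> 1).

(* [mharm m n] with the entries k_i ranging over ['I_N] for a fixed [N] instead of ['I_n.+1],
   so that it unfolds recursively in [m]. *)
Definition mharm_ord (N m n : nat) : rat :=
  \sum_(k : {ffun 'I_m -> 'I_N} |
          [forall i, (0 < k i)%N] && (\sum_(i < m) (k i : nat) <= n)%N)
     \prod_(i < m) recip (k i).

Lemma mharm_ord0 N n : mharm_ord N 0 n = 1.
Proof.
rewrite /mharm_ord (eq_bigl xpredT) => [|f]; last first.
  by rewrite big_ord0 andbT; apply/forallP => -[].
rewrite (eq_bigr (fun=> 1)) => [|f _]; last by rewrite big_ord0.
by rewrite sumr_const card_ffun !card_ord expn0.
Qed.

Lemma mharm_ordS N m n :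
  mharm_ord N m.+1 n = \sum_(t < N | (t <= n)%N) recip t * mharm_ord N m (n - t).
Proof.
rewrite /mharm_ord big_mkcond big_ffun_cons [RHS]big_mkcond /=; apply: eq_bigr => t _.
under eq_bigr do rewrite (ffun_cons_forall _ _ (fun x : 'I_N => 0 < x)%N)
  (big_ord_ffun_cons _ _ (fun x : 'I_N => x : nat)) (big_ord_ffun_cons _ _ (fun x : 'I_N => recip x)).
have [-> | _] := posnP t; first by rewrite recip0 mul0r big1 ?if_same.
case: leqP => [le_tn | lt_nt].
  by rewrite mulr_sumr [RHS]big_mkcond; apply: eq_bigr => g _; rewrite leq_subRL.
apply: big1 => g _; case: ifP => // /andP[_ le_sum].
by move: (leq_trans (leq_addr _ _) le_sum); rewrite leqNgt lt_nt.
Qed.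

Lemma mharm_ordE N m n : (n < N)%N -> mharm_ord N m n = mharm_seq m n.
Proof.
elim: m n => [|m IHm] n lt_nN; first exact: mharm_ord0.
rewrite mharm_ordS /= /conv (big_ord_widen N (fun k => recip k * mharm_seq m (n - k))) //.
by apply: eq_bigr => t le_tn; rewrite IHm // (leq_ltn_trans (leq_subr _ _) lt_nN).
Qed.

Lemma mharmE m n : mharm m n = mharm_seq m n.
Proof.
case: m => [//|m]; rewrite -(mharm_ordE _ (ltnSn n)); apply: eq_bigl => k.
case Pk: [forall i, _] => //=.
by rewrite big_ord_recl addn_gt0 (forallP Pk ord0).
Qed.

Lemma harmE n : harm n = mharm_seq 1 n.
Proof.
rewrite /= /conv; under eq_bigr do rewrite mulr1.
by rewrite -(big_mkord xpredT) big_nat_recl // recip0 add0r /harm big_add1.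
Qed.

Lemma mul_bin_central j :
  (j.+1 * j.+1 * 'C((2 * j).+2, j.+1) = (2 * j).+2 * (2 * j).+1 * 'C(2 * j, j))%N.
Proof.
have := mul_bin_down (2 * j).+1 j; rewrite (_ : (2 * j).+1 - j = j.+1)%N; last lia.
have := mul_bin_diag (2 * j).+2 j => /= diag down.
by rewrite -mulnA -diag mulnCA -down mulnA.
Qed.

Definition weight (p k : nat) : rat :=
  (2%:R ^+ (2 * k))^-1 * ('C(2 * (k + p), k + p))%:R * ('C(k + p, k))%:R.

Lemma weightS p k : weight p k.+1 * (2 * k.+1)%:R = weight p k * (2 * (k + p) + 1)%:R.
Proof.
rewrite /weight addSn (_ : 2 * (k + p).+1 = (2 * (k + p)).+2)%N; last lia.
set j := (k + p)%N.
have central : ('C((2 * j).+2, j.+1))%:R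
    = (2 * j).+2%:R * (2 * j).+1%:R / (j.+1%:R * j.+1%:R) * ('C(2 * j, j))%:R :> rat.
  have := congr1 (GRing.natmul (1 : rat)) (mul_bin_central j); rewrite !natrM => eqC.
  apply: (@mulfI _ (j.+1%:R * j.+1%:R)); first by rewrite mulf_neq0 ?pnatr_eq0.
  by rewrite eqC; field; rewrite nat1r pnatr_eq0.
have diag : ('C(j.+1, k.+1))%:R = j.+1%:R / k.+1%:R * ('C(j, k))%:R :> rat.
  have := congr1 (GRing.natmul (1 : rat)) (mul_bin_diag j.+1 k); rewrite !natrM => eqC.
  apply: (@mulfI _ k.+1%:R); first by rewrite pnatr_eq0.
  by rewrite -eqC /=; field; rewrite nat1r pnatr_eq0.
rewrite central diag mulnS exprD expr2 !mulrS !natrM !natrD.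
by field; rewrite addr0 -mulr2n -natrD !nat1r expf_neq0 ?pnatr_eq0.
Qed.

Lemma oharmS n : oharm n.+1 = oharm n + ((2 * n + 1)%:R)^-1.
Proof. by rewrite /oharm big_nat_recr //=; congr (_ + _ ^-1); congr _%:R; lia. Qed.

Definition oweight (p k : nat) : rat := weight p k * (oharm (k + p) - oharm p).

Lemma oweightS p k :
  oweight p k.+1 * (2 * k.+1)%:R = oweight p k * (2 * (k + p) + 1)%:R + weight p k.
Proof.
rewrite /oweight addSn oharmS mulrAC weightS.
by field; rewrite -natrD -natrM natr1 pnatr_eq0.
Qed.

Lemma conv_weight_recipS p k :
  conv (weight p) recip k.+1 * (2 * k.+1)%:R
  = conv (weight p) recip k * (2 * (k + p) + 1)%:R + 2 * weight p k.
Proof.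
have shift : conv (fun i => weight p i * i%:R) recip k.+1
    = 2^-1 * conv (fun i => 2 * (weight p i * i%:R) + (2 * p + 1)%:R * weight p i) recip k.
  rewrite conv_shiftl ?mulr0 // -convMl /conv; apply: eq_bigr => i _.
  have -> : weight p i.+1 * i.+1%:R = 2^-1 * (weight p i * (2 * (i + p) + 1)%:R).
    by rewrite -weightS natrM; field.
  by field.
have eq_k := conv_recip_mulr (weight p) k.
have -> : (2 * (k + p) + 1)%:R = 2 * k%:R + (2 * p + 1)%:R :> rat.
  by rewrite -natrM -natrD; congr _%:R; lia.
rewrite natrM mulrCA conv_recip_mulr shift convDl !convMl big_ord_recr /=.
by rewrite mulrDr [in RHS]mulrDr [in RHS]mulrCA eq_k; field.
Qed.

Lemma conv_weight_recip p k : conv (weight p) recip k = 2 * oweight p k.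
Proof.
elim: k => [|k IHk].
  by rewrite /conv /oweight big_ord1 recip0 add0n subrr !mulr0.
apply: (@mulIf _ (2 * k.+1)%:R); first by rewrite pnatr_eq0.
by rewrite conv_weight_recipS IHk -[RHS]mulrA oweightS; ring.
Qed.

Lemma conv_oweight p f n :
  conv (oweight p) f n = 2^-1 * conv (weight p) (conv recip f) n.
Proof.
rewrite convA -convMl; apply: eq_bigr => k _.
by rewrite conv_weight_recip mulrA mulVf ?mul1r.
Qed.

Lemma sum_oweight p n :
  \sum_(0 <= k < n.+1) oweight p k
  = weight p n * (2 * (n + p) + 1)%:R / (2 * p + 1)%:R * (oharm (n + p).+1 - oharm p.+1).
Proof.
elim: n => [|n IHn]; first by rewrite big_nat1 /oweight add0n !subrr !mulr0.
rewrite big_nat_recr //= IHn /oweight !(addSn n p) !oharmS.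
have -> : weight p n.+1 = weight p n * (2 * (n + p) + 1)%:R / (2 * n.+1)%:R.
  by rewrite -weightS mulfK ?pnatr_eq0.
have := ler0n rat n; have := ler0n rat p => *.
by field; repeat (apply/andP; split); apply/negP => /eqP; lra.
Qed.

Lemma weight_closed_form p n :
  (2%:R ^+ (2 * n))^-1 * ((p + 1)%:R / (2 * p + 1)%:R)
    * ('C(2 * (n + p + 1), n + p + 1))%:R * ('C(n + p + 1, n))%:R
  = 2 * (weight p n * (2 * (n + p) + 1)%:R / (2 * p + 1)%:R).
Proof.
rewrite -weightS /weight (_ : n + p + 1 = n.+1 + p)%N; last lia.
have := mul_bin_left (n.+1 + p) n; rewrite (_ : n.+1 + p - n = p + 1)%N; last lia.
move/(congr1 (GRing.natmul (1 : rat))); rewrite !natrM => bin_left.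
have -> : ('C(n.+1 + p, n))%:R = n.+1%:R / (p + 1)%:R * ('C(n.+1 + p, n.+1))%:R :> rat.
  apply: (@mulfI _ (p + 1)%:R); first by rewrite pnatr_eq0 addn1.
  by rewrite -bin_left; field; rewrite natr1 pnatr_eq0.
rewrite mulnS exprD expr2; have := ler0n rat p => ?.
by field; repeat (apply/andP; split); rewrite ?expf_neq0 //; apply/negP => /eqP; lra.
Qed.

Theorem theorem13 (n p : nat) :
  (forall m : nat,
    \sum_(0 <= k < n.+1)
       ((2%:R ^+ (2 * k))^-1 * ('C(2 * (k + p), k + p))%:R * ('C(k + p, k))%:R
          * mharm m (n - k) * (oharm (k + p) - oharm p))
    = 2%:R^-1 * \sum_(0 <= k < n.+1)
       ((2%:R ^+ (2 * k))^-1 * ('C(2 * (k + p), k + p))%:R * ('C(k + p, k))%:R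
          * mharm m.+1 (n - k)) :> rat)
  /\
  \sum_(0 <= k < n.+1)
     ((2%:R ^+ (2 * k))^-1 * ('C(2 * (k + p), k + p))%:R * ('C(k + p, k))%:R
        * harm (n - k))
  = (2%:R ^+ (2 * n))^-1 * ((p + 1)%:R / (2 * p + 1)%:R)
      * ('C(2 * (n + p + 1), n + p + 1))%:R * ('C(n + p + 1, n))%:R
      * (oharm (n + p + 1) - oharm (p + 1)) :> rat.
Proof.
split=> [m|].
  rewrite !big_mkord.
  transitivity (conv (oweight p) (mharm_seq m) n).
    by apply: eq_bigr => k _; rewrite mharmE /oweight /weight mulrAC.
  by rewrite conv_oweight; congr (_ * _); apply: eq_bigr => k _; rewrite mharmE.
rewrite weight_closed_form (addn1 (n + p)) (addn1 p) -(mulrA 2) -sum_oweight !big_mkord.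
transitivity (2 * conv (oweight p) (mharm_seq 0) n).
  by rewrite conv_oweight mulrA mulfV ?mul1r //; apply: eq_bigr => k _; rewrite harmE.
by congr (_ * _); apply: eq_bigr => k _; rewrite mulr1.
Qed.
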